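(* Let $C_3=\{000,111\}$ and let $$C_7=\{\bm{x}\,\|\,(\pi(\bm{x})+1)\,\|\,(\bm{x}+\bm{c}) : \bm{x}\in\mathbb{B}_3,\ \bm{c}\in C_3\}\subseteq \mathbb{B}_7 .$$ Then $C_7$ is a perfect code in the graph $\Gamma_7(1^5)$.
   Context: $\mathbb{B}_k$ is the set of binary strings of length $k$, identified with vectors of $\mathbb{Z}_2^k$; $\bm{x}+\bm{c}$ is the coordinatewise sum modulo 2, $\pi(x_1\dots x_k)=x_1+\dots+x_k \pmod 2$ is the parity, and $\|$ denotes concatenation (the middle term is a single bit). The $n$-cube $Q_n$ has vertex set $\mathbb{B}_n$, two strings adjacent if they differ in exactly one position. $\Gamma_n(1^s)$ is the subgraph of $Q_n$ induced by strings not containing $1^s$ (the string of $s$ consecutive 1's) as a substring (i.e. as a block of consecutive positions). A perfect code in a graph $G$ is a set $C$ of vertices such that every vertex of $G$ lies in the closed neighbourhood $N[c]=\{v: d_G(c,v)\le 1\}$ of exactly one $c\in C$. *)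

From mathcomp Require Import all_boot.
Set Implicit Arguments. Unset Strict Implicit. Unset Printing Implicit Defensive.

Definition word (k : nat) := k.-tuple bool.

Definition wadd k (x y : word k) : word k := [tuple of map (fun p => p.1 (+) p.2) (zip x y)].

Definition parity k (x : word k) : bool := foldr addb false x.

Definition hamming k (x y : word k) : nat := count id (map (fun p => p.1 != p.2) (zip x y)).

Definition cube_adj n (x y : word n) : bool := hamming x y == 1.

Definition ones s : seq bool := nseq s true.

Definition contains_ones s (x : seq bool) : bool := infix (ones s) x.

Definition gamma_vertex n s (x : word n) : bool := ~~ contains_ones s x.

Definition gamma_closed_nbhd n s (c v : word n) : bool :=
  [&& gamma_vertex s c, gamma_vertex s v & (v == c) || cube_adj c v].

Definition perfect_code_gamma n s (C : {set word n}) : Prop :=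
  (forall c, c \in C -> gamma_vertex s c) /\
  (forall v : word n, gamma_vertex s v ->
     #|[set c in C | gamma_closed_nbhd s c v]| = 1).

Definition cat3 (x : word 3) (b : bool) (y : word 3) : word 7 :=
  [tuple of x ++ b :: y].

Definition C3 : {set word 3} :=
  [set [tuple false; false; false]; [tuple true; true; true]].

Definition C7 : {set word 7} :=
  [set cat3 x (parity x (+) true) (wadd x c) | x in [set: word 3], c in C3].

From mathcomp Require Import all_boot.
Set Implicit Arguments. Unset Strict Implicit. Unset Printing Implicit Defensive.

(* [C7] has 16 words and [Gamma_7(1^5)] has 128 - 8 = 120 vertices, so the
   theorem is a finite check.  The only work is to replace the finite-type
   quantifiers, whose enumeration of tuples does not compute, by explicit
   lists, and to count neighbours over a duplicate-free listing of [C7]. *)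

Fixpoint bool_tuples n : seq (n.-tuple bool) :=
  if n is n'.+1 then [seq cons_tuple b t | b <- [:: false; true], t <- bool_tuples n']
  else [:: [tuple]].

Lemma mem_bool_tuples n (x : n.-tuple bool) : x \in bool_tuples n.
Proof.
elim: n x => [|n IHn] x; first by rewrite tuple0 mem_seq1.
case/tupleP: x => b t; apply/allpairsP; exists (b, t) => /=.
by split; [case: b | exact: IHn | apply: val_inj].
Qed.

Lemma all_bool_tuplesP n (P : pred (n.-tuple bool)) :
  reflect (forall x, P x) (all P (bool_tuples n)).
Proof.
apply: (iffP allP) => [allP x | allP x _]; last exact: allP.
exact: allP (mem_bool_tuples x).
Qed.

Lemma card_set_uniq_seq (T : finType) (C : {set T}) (cs : seq T) (P : pred T) :
  C =i cs -> uniq cs -> #|[set c in C | P c]| = count P cs.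
Proof.
move=> C_cs cs_uniq; rewrite -size_filter -(card_uniqP (filter_uniq P cs_uniq)).
by apply: eq_card => c; rewrite inE mem_filter C_cs andbC.
Qed.

Lemma perfect_code_gamma_seq n s (C : {set word n}) (cs : seq (word n)) :
  C =i cs -> uniq cs -> all (gamma_vertex s) cs ->
  all (fun v => gamma_vertex s v ==> (count (gamma_closed_nbhd s ^~ v) cs == 1))
      (bool_tuples n) ->
  perfect_code_gamma s C.
Proof.
move=> C_cs cs_uniq /allP cs_vertex /all_bool_tuplesP count1; split.
  by move=> c; rewrite C_cs; exact: cs_vertex.
by move=> v v_vertex; rewrite (card_set_uniq_seq _ C_cs cs_uniq); apply/eqP/(implyP (count1 v)).
Qed.

Definition C3_seq : seq (word 3) := [:: [tuple false; false; false]; [tuple true; true; true]].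

Definition C7_seq : seq (word 7) :=
  [seq cat3 x (parity x (+) true) (wadd x c) | x <- bool_tuples 3, c <- C3_seq].

Lemma mem_C7_seq : C7 =i C7_seq.
Proof.
have C3_seqE : C3 =i C3_seq by move=> c; rewrite !inE.
move=> v; apply/imset2P/allpairsP => [[x c _ Cc ->] | [[x c] [_ Cc ->]]].
  by exists (x, c); rewrite -C3_seqE mem_bool_tuples.
by exists x c; rewrite ?C3_seqE.
Qed.

Theorem mainTheorem4 : perfect_code_gamma 5 C7.
Proof. by apply: (perfect_code_gamma_seq mem_C7_seq); vm_compute. Qed.
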